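(* Let $N\in\{\tfrac12,1,\tfrac32,2,\dots\}$, $n\in\{0,1,\dots,\lfloor N+\tfrac12\rfloor\}$, and $\alpha\in\mathbb{C}$ with $\alpha+1$ not a nonpositive integer. Then for all $x\in\mathbb{C}$: $${}_3F_2\!\left(\begin{matrix}-2n,\,2n+2\alpha+1,\,-x-N-\frac12\\ \alpha+1,\,-2N-1\end{matrix};1\right)={}_4F_3\!\left(\begin{matrix}-n,\,n+\alpha+\frac12,\,-x-N-\frac12,\,x-N-\frac12\\ \alpha+1,\,-N-\frac12,\,-N\end{matrix};1\right),$$ i.e. $Q_{2n}(x+N+\tfrac12;\alpha,\alpha,2N+1)=R_n\big(x^2-(N+\tfrac12)^2;\alpha,-\tfrac12,-N-1,-N-1\big)$ in terms of Hahn and Racah polynomials.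
   Context: ${}_rF_s$ is the generalized hypergeometric series with Pochhammer symbols $(c)_k=c(c+1)\cdots(c+k-1)$, terminating here via the numerator $-2n$ resp. $-n$. Hahn: $Q_n(x;\alpha,\beta,N)={}_3F_2(-n,n+\alpha+\beta+1,-x;\alpha+1,-N;1)$. Racah: $R_n(y(y+\gamma+\delta+1);\alpha,\beta,\gamma,\delta)={}_4F_3(-n,n+\alpha+\beta+1,-y,y+\gamma+\delta+1;\alpha+1,\beta+\delta+1,\gamma+1;1)$. *)

(* The complex field C is modelled by an arbitrary
   numClosedFieldType (algebraically closed number field, e.g. algC). *)
From HB Require Import structures.
From mathcomp Require Import all_boot all_order all_algebra.
Set Implicit Arguments. Unset Strict Implicit. Unset Printing Implicit Defensive.
Import Order.TTheory GRing.Theory Num.Theory.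
Local Open Scope ring_scope.

Definition poch {R : pzRingType} (c : R) (k : nat) : R :=
  \prod_(i < k) (c + i%:R).

(* Generalized hypergeometric series  pFq(a; b; z), truncated at index m
   (used for terminating series, where all terms with k > m vanish because a
   numerator parameter equals -m). *)
Definition hypF {R : fieldType} (a b : seq R) (z : R) (m : nat) : R :=
  \sum_(k < m.+1)
    (\prod_(c <- a) poch c k) / (\prod_(d <- b) poch d k) * z ^+ k / (k`!)%:R.

From HB Require Import structures.
From mathcomp Require Import all_boot all_order all_algebra.
From mathcomp Require Import ring zify.
Import Order.TTheory GRing.Theory Num.Theory.
Set Implicit Arguments. Unset Strict Implicit. Unset Printing Implicit Defensive.
Local Open Scope ring_scope.

(* Put y = x + N + 1/2 and P = 2N + 1; both sides are then expanded in the
   polynomials (-y)_k, k <= 2n.  On the 4F3 side, Chu-Vandermonde gives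
     (-y)_j (y - P)_j = (-1)^j sum_k C(j, k - j) (P + 1 - 2j)_(2j-k) (-y)_k,
   and the duplication formula (-P/2)_j ((1 - P)/2)_j = 4^-j (-P)_(2j) makes the
   coefficient of (-1)^k (-y)_k / (-P)_k the single sum S_k = sum_j w_j C(j, k - j).
   The 3F2 coefficient T_k is hypergeometric in k, and S_k satisfies the same
   first-order recurrence, by a telescoping (Zeilberger) certificate. *)

Lemma big_ord_shift (V : nmodType) (F : nat -> V) (j m K : nat) :
  (j + m < K)%N -> (forall k, (k < j)%N || (j + m < k)%N -> F k = 0) ->
  \sum_(k < K) F k = \sum_(i < m.+1) F (j + i)%N.
Proof.
move=> ltK F0.
rewrite -(big_mkord xpredT) (@big_cat_nat _ _ _ j) //=; last by lia.
rewrite big_nat_cond big1 ?add0r; last first.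
  by move=> k /andP[/andP[_ ltkj] _]; rewrite F0 ?ltkj.
rewrite (@big_cat_nat _ _ _ (j + m).+1) //=; last by lia.
rewrite [X in _ + X]big_nat_cond [X in _ + X]big1 ?addr0; last first.
  by move=> k /andP[/andP[ltk _] _]; rewrite F0 // ltk orbT.
rewrite -{1}[j]add0n big_addn.
have -> : ((j + m).+1 - j = m.+1)%N by lia.
by rewrite big_mkord; apply: eq_bigr => i _; rewrite addnC.
Qed.

Lemma big_ord_widen_eq0 (V : nmodType) (F : nat -> V) a b : (a <= b)%N ->
  (forall i, (a <= i < b)%N -> F i = 0) -> \sum_(i < a) F i = \sum_(i < b) F i.
Proof.
move=> leab F0; rewrite (big_ord_widen _ F leab) big_mkcond /=.
by apply: eq_bigr => i _; case: ltnP => // leai; rewrite F0 // leai ltn_ord.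
Qed.

Lemma first_order_rec_unique (R : idomainType) (a b u v : nat -> R) :
  (forall k, a k != 0) ->
  (forall k, a k * u k.+1 + b k * u k = 0) ->
  (forall k, a k * v k.+1 + b k * v k = 0) ->
  u 0%N = v 0%N -> forall k, u k = v k.
Proof.
move=> a_neq0 rec_u rec_v uv0; elim=> // k IH.
apply: (mulfI (a_neq0 k)); apply: (addIr (b k * v k)).
by rewrite rec_v -IH rec_u.
Qed.

Lemma natr_bin_rshift (R : numFieldType) (j m : nat) : (m <= j)%N ->
  'C(j, m.+1)%:R = (j%:R - m%:R) * 'C(j, m)%:R / m.+1%:R :> R.
Proof.
move=> lemj; have m1_neq0 : m.+1%:R != 0 :> R by rewrite pnatr_eq0.
apply: (mulIf m1_neq0); rewrite mulfVK // -natrB // -!natrM.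
by rewrite mulnC mul_bin_left.
Qed.

Lemma natr_bin_lshift (R : numFieldType) (j m : nat) : (m <= j)%N ->
  'C(j.+1, m)%:R = j.+1%:R * 'C(j, m)%:R / (j.+1%:R - m%:R) :> R.
Proof.
move=> lemj; have jm_neq0 : j.+1%:R - m%:R != 0 :> R.
  by rewrite -natrB ?pnatr_eq0 ?subn_eq0 -?ltnNge ?ltnS // leqW.
apply: (mulIf jm_neq0); rewrite mulfVK // -natrB ?leqW // -!natrM.
by rewrite mulnC -mul_bin_down.
Qed.

(* The guard matters: for k < j the truncated k - j would give 'C(j, 0) = 1. *)
Definition bin_shift (j k : nat) : nat := if (j <= k)%N then 'C(j, k - j) else 0.

Lemma bin_shift_addr j i : bin_shift j (j + i) = 'C(j, i).
Proof. by rewrite /bin_shift leq_addr addKn. Qed.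

Lemma bin_shift_eq0 j k : (k < j)%N || (j + j < k)%N -> bin_shift j k = 0.
Proof.
rewrite /bin_shift; case: leqP => //= lejk lt2jk.
by rewrite bin_small //; lia.
Qed.

Section Pochhammer.
Variable R : comPzRingType.
Implicit Types a b c : R.

Lemma poch0 c : poch c 0 = 1.
Proof. by rewrite /poch big_ord0. Qed.

Lemma pochS c k : poch c k.+1 = poch c k * (c + k%:R).
Proof. by rewrite /poch big_ord_recr. Qed.

Lemma pochD c m l : poch c (m + l) = poch c m * poch (c + m%:R) l.
Proof.
elim: l => [|l IH]; first by rewrite addn0 poch0 mulr1.
by rewrite addnS !pochS IH natrD addrA mulrA.
Qed.

Lemma poch_reflect c l : poch c l = (-1) ^+ l * poch (- c - l%:R + 1) l.
Proof.
elim: l => [|l IH]; first by rewrite !poch0 expr0 mulr1.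
rewrite pochS IH -add1n pochD pochS poch0 exprS.
have -> : - c - l.+1%:R + 1 + 1%:R = - c - l%:R + 1 by rewrite -natr1; ring.
rewrite -natr1; ring.
Qed.

Lemma poch_split_reflect c k m : (k <= m)%N ->
  poch c m = poch c k * ((-1) ^+ (m - k) * poch (- c - m%:R + 1) (m - k)).
Proof.
move=> lekm; rewrite -{1}(subnKC lekm) pochD (poch_reflect (c + k%:R)) natrB //.
by congr (_ * (_ * poch _ _)); ring.
Qed.

Lemma poch_opp_nat_eq0 (n j : nat) : (n < j)%N -> poch (- n%:R : R) j = 0.
Proof. by move=> ltnj; rewrite -(subnKC ltnj) pochD pochS addNr mulr0 mul0r. Qed.

Lemma poch_vandermonde a b j :
  poch (a + b) j = \sum_(m < j.+1) 'C(j, m)%:R * poch a m * poch b (j - m).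
Proof.
elim: j => [|j IH].
  by rewrite big_ord_recl big_ord0 !poch0 bin0 addr0 !mul1r.
have pascal : \sum_(m < j.+2) 'C(j.+1, m)%:R * poch a m * poch b (j.+1 - m) =
    \sum_(m < j.+2) 'C(j, m)%:R * poch a m * poch b (j.+1 - m) +
    \sum_(m < j.+1) 'C(j, m)%:R * poch a m.+1 * poch b (j - m).
  rewrite big_ord_recl [X in _ = X + _]big_ord_recl !bin0 -addrA -big_split /=.
  by congr (_ + _); apply: eq_bigr => i _; rewrite binS natrD !mulrDl subSS.
have shift_b : \sum_(m < j.+2) 'C(j, m)%:R * poch a m * poch b (j.+1 - m) =
    \sum_(m < j.+1) 'C(j, m)%:R * poch a m * poch b (j - m) * (b + (j - m)%:R).
  rewrite big_ord_recr /= bin_small // !mul0r addr0.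
  by apply: eq_bigr => i _; rewrite subSn ?pochS ?mulrA // -ltnS.
rewrite pascal shift_b -big_split pochS IH mulr_suml; apply: eq_bigr => i _ /=.
have leij : (i <= j)%N by rewrite -ltnS.
rewrite pochS natrB //; ring.
Qed.

Definition connection_coef (P : R) (j k : nat) : R :=
  (-1) ^+ j * (bin_shift j k)%:R * poch (P + 1 - (2 * j)%:R) (2 * j - k).

Lemma poch_opp_mul_sub (y P : R) (j K : nat) : (2 * j < K)%N ->
  poch (- y) j * poch (y - P) j = \sum_(k < K) connection_coef P j k * poch (- y) k.
Proof.
move=> ltK; pose F k := connection_coef P j k * poch (- y) k.
rewrite (@big_ord_shift _ F j j); last 2 first.
- by lia.
- by move=> k /bin_shift_eq0 bin0; rewrite /F /connection_coef bin0 mulr0 !mul0r.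
rewrite (poch_reflect (y - P)).
have -> : - (y - P) - j%:R + 1 = (- y + j%:R) + (P + 1 - (2 * j)%:R).
  by rewrite natrM; ring.
rewrite poch_vandermonde !mulr_sumr; apply: eq_bigr => i _; rewrite /F /connection_coef.
have -> : (2 * j - (j + i) = j - i)%N by lia.
by rewrite bin_shift_addr pochD; ring.
Qed.

End Pochhammer.

Lemma poch_neq0 (R : idomainType) (c : R) k :
  (forall i, (i < k)%N -> c + i%:R != 0) -> poch c k != 0.
Proof. by move=> neq0; apply/prodf_neq0 => i _; apply: neq0. Qed.

Lemma poch_opp_nat_neq0 (R : numDomainType) (m k : nat) :
  (k <= m)%N -> poch (- m%:R : R) k != 0.
Proof.
by move=> lekm; apply: poch_neq0 => i ltik; rewrite addrC subr_eq0 eqr_nat; lia.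
Qed.

Lemma poch_nat_neq0 (R : numDomainType) (m k : nat) : poch (m.+1%:R : R) k != 0.
Proof. by apply: poch_neq0 => i _; rewrite -natrD pnatr_eq0. Qed.

Lemma poch_double (R : fieldType) (c : R) j : (2 : R) != 0 ->
  poch c (2 * j) = 4 ^+ j * poch (c / 2) j * poch ((c + 1) / 2) j.
Proof.
move=> two_neq0; elim: j => [|j IH]; first by rewrite muln0 !poch0 expr0 !mulr1.
by rewrite mulnS addnC pochD IH !pochS poch0 natrM exprS; field.
Qed.

Lemma poch_half_pair (R : numFieldType) (P : R) j k : (k <= 2 * j)%N ->
  poch (- P / 2) j * poch ((- P + 1) / 2) j =
  poch (- P) k * ((-1) ^+ k * poch (P + 1 - (2 * j)%:R) (2 * j - k)) / 4 ^+ j.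
Proof.
move=> lek2j; have two_neq0 : (2 : R) != 0 by rewrite pnatr_eq0.
have four_neq0 : (4 : R) != 0 by rewrite pnatr_eq0.
have sign_odd : (-1) ^+ (2 * j - k) = (-1) ^+ k :> R.
  by rewrite -signr_odd oddB ?oddM /= ?signr_odd.
have -> : P + 1 - (2 * j)%:R = - - P - (2 * j)%:R + 1 by ring.
rewrite -sign_odd -poch_split_reflect // poch_double //.
by field; rewrite expf_neq0.
Qed.

Section ConnectionCoefficients.
Variables (R : numFieldType) (n : nat) (al : R).
Hypothesis al1_neq0 : forall i : nat, al + 1 + i%:R != 0.

Definition racah_weight j : R :=
  poch (- n%:R) j * poch (n%:R + al + 2^-1) j * (-4) ^+ j / (poch (al + 1) j * j`!%:R).

Definition racah_coef_sum k : R :=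
  \sum_(j < k.+1) racah_weight j * (bin_shift j k)%:R.

Definition hahn_coef k : R :=
  (-1) ^+ k * poch (- (2 * n)%:R) k * poch ((2 * n)%:R + 2 * al + 1) k /
    (poch (al + 1) k * k`!%:R).

Let rec_lead k : R := (al + 1 + k%:R) * k.+1%:R.
Let rec_tail k : R := (k%:R - 2 * n%:R) * (k%:R + 2 * n%:R + 2 * al + 1).

Definition zeilberger_cert k j : R :=
  - (j%:R + al) * (2 * j%:R - k%:R - 1) * racah_weight j * (bin_shift j k.+1)%:R.

Lemma poch_al1_neq0 j : poch (al + 1) j != 0.
Proof. by apply: poch_neq0 => i _; apply: al1_neq0. Qed.

Lemma natr_fact_neq0 j : j`!%:R != 0 :> R.
Proof. by rewrite pnatr_eq0 -lt0n fact_gt0. Qed.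

Lemma racah_weightS j : racah_weight j.+1 =
  racah_weight j * ((-4) * (j%:R - n%:R) * (j%:R + (n%:R + al + 2^-1))) /
    ((al + 1 + j%:R) * j.+1%:R).
Proof.
have p_neq0 := poch_al1_neq0 j; have a_neq0 := al1_neq0 j.
have f_neq0 := natr_fact_neq0 j.
have j1_neq0 : 1 + j%:R != 0 :> R by rewrite addrC natr1 pnatr_eq0.
rewrite /racah_weight !pochS exprS factS natrM -natr1.
by field; rewrite j1_neq0 a_neq0 f_neq0 p_neq0.
Qed.

Lemma zeilberger_telescope j k :
  rec_lead k * (racah_weight j * (bin_shift j k.+1)%:R) +
    rec_tail k * (racah_weight j * (bin_shift j k)%:R) =
  zeilberger_cert k j.+1 - zeilberger_cert k j.
Proof.
rewrite /zeilberger_cert /rec_lead /rec_tail.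
have [far|] := boolP ((k.+1 < j)%N || ((2 * j).+1 < k)%N).
  by rewrite !bin_shift_eq0 ?(mulr0, subr0, addr0) //; lia.
rewrite negb_or -!leqNgt => /andP[lejk lek2j].
have [->|neq_jk] := eqVneq j k.+1.
  rewrite (@bin_shift_eq0 k.+1 k) ?(@bin_shift_eq0 k.+2 k.+1) ?ltnSn //.
  have -> : bin_shift k.+1 k.+1 = 1%N by rewrite /bin_shift leqnn subnn bin0.
  ring.
have [->|neq_k2j] := eqVneq k (2 * j).+1.
  rewrite (@bin_shift_eq0 j (2 * j).+1) ?(@bin_shift_eq0 j (2 * j).+2); try lia.
  have -> : ((2 * j).+2 = j.+1 + j.+1)%N by lia.
  by rewrite bin_shift_addr binn; ring.
have [m km] : exists m, k = (j + m)%N by exists (k - j)%N; lia.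
subst k; have lemj : (m <= j)%N by lia.
have -> : bin_shift j (j + m).+1 = 'C(j, m.+1) by rewrite -addnS bin_shift_addr.
have -> : bin_shift j.+1 (j + m).+1 = 'C(j.+1, m) by rewrite -addSn bin_shift_addr.
rewrite bin_shift_addr racah_weightS natr_bin_rshift // natr_bin_lshift //.
have n1_neq0 (i : nat) : 1 + i%:R != 0 :> R by rewrite addrC natr1 pnatr_eq0.
have jm_neq0 : 1 + j%:R - m%:R != 0 :> R.
  by rewrite [1 + _]addrC natr1 -natrB ?pnatr_eq0; lia.
by field; rewrite !n1_neq0 jm_neq0 al1_neq0.
Qed.

Lemma racah_coef_sum_rec k :
  rec_lead k * racah_coef_sum k.+1 + rec_tail k * racah_coef_sum k = 0.
Proof.
have -> : racah_coef_sum k = \sum_(j < k.+2) racah_weight j * (bin_shift j k)%:R.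
  by rewrite /racah_coef_sum [RHS]big_ord_recr /= bin_shift_eq0 ?ltnSn // mulr0 addr0.
rewrite /racah_coef_sum !mulr_sumr -big_split /=.
under eq_bigr => j _ do rewrite zeilberger_telescope.
rewrite -(big_mkord xpredT (fun j => zeilberger_cert k j.+1 - zeilberger_cert k j)).
by rewrite telescope_sumr // /zeilberger_cert !bin_shift_eq0 ?ltnSn // !mulr0 subrr.
Qed.

Lemma hahn_coef_rec k : rec_lead k * hahn_coef k.+1 + rec_tail k * hahn_coef k = 0.
Proof.
have p_neq0 := poch_al1_neq0 k; have a_neq0 := al1_neq0 k.
have f_neq0 := natr_fact_neq0 k.
have k1_neq0 : 1 + k%:R != 0 :> R by rewrite addrC natr1 pnatr_eq0.
rewrite /rec_lead /rec_tail /hahn_coef !pochS exprS factS natrM -natr1.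
by field; rewrite k1_neq0 a_neq0 f_neq0 p_neq0.
Qed.

Lemma racah_coef_sum_hahn k : racah_coef_sum k = hahn_coef k.
Proof.
apply: (@first_order_rec_unique _ rec_lead rec_tail) k.
- by move=> k; rewrite mulf_neq0 ?al1_neq0 ?pnatr_eq0.
- exact: racah_coef_sum_rec.
- exact: hahn_coef_rec.
rewrite /racah_coef_sum /hahn_coef /racah_weight big_ord1 /bin_shift /=.
by rewrite !poch0 !expr0 fact0 bin0 !mulr1 !divr1.
Qed.

End ConnectionCoefficients.

Section HypergeometricExpansions.
Variables (R : numFieldType) (n p : nat) (al : R).
Hypothesis al1_neq0 : forall i : nat, al + 1 + i%:R != 0.
Hypothesis le2np : (2 * n <= p)%N.

Definition racah_term j : R :=
  poch (- n%:R) j * poch (n%:R + al + 2^-1) j /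
    (poch (al + 1) j * (poch (- p%:R / 2) j * poch ((- p%:R + 1) / 2) j)) / j`!%:R.

Lemma racah_term_connection j k : (j <= n)%N ->
  racah_term j * connection_coef p%:R j k =
  racah_weight n al j * (bin_shift j k)%:R * ((-1) ^+ k / poch (- p%:R) k).
Proof.
move=> lejn; rewrite /racah_term /connection_coef.
have [out|] := boolP ((k < j)%N || (j + j < k)%N).
  by rewrite bin_shift_eq0 // !(mulr0, mul0r).
rewrite negb_or -!leqNgt => /andP[lejk lek2j].
have p_neq0 : poch (- p%:R : R) k != 0 by apply: poch_opp_nat_neq0; lia.
have q_neq0 : poch (p%:R + 1 - (2 * j)%:R : R) (2 * j - k) != 0.
  have -> : p%:R + 1 - (2 * j)%:R = (p - 2 * j).+1%:R :> R.
    by rewrite -natr1 natrB; [ring | lia].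
  exact: poch_nat_neq0.
have a_neq0 := poch_al1_neq0 al1_neq0 j; have f_neq0 := natr_fact_neq0 R j.
have four_neq0 : (4 : R) != 0 by rewrite pnatr_eq0.
rewrite /racah_weight (poch_half_pair _ (k := k)); last by lia.
have -> : (-4) ^+ j = (-1) ^+ j * 4 ^+ j :> R by rewrite -exprMn mulN1r.
rewrite -[(-1) ^+ k]signr_odd.
by case: (odd k); rewrite ?expr0 ?expr1; field;
  rewrite p_neq0 f_neq0 a_neq0 q_neq0 expf_neq0.
Qed.

Lemma racah_coef_sum_widen k : (k <= 2 * n)%N ->
  \sum_(j < n.+1) racah_weight n al j * (bin_shift j k)%:R = racah_coef_sum n al k.
Proof.
move=> lek; pose F j := racah_weight n al j * (bin_shift j k)%:R.
rewrite /racah_coef_sum (@big_ord_widen_eq0 _ F n.+1 (2 * n).+1); first last.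
- by move=> j /andP[ltnj _]; rewrite /F /racah_weight poch_opp_nat_eq0 // !mul0r.
- by lia.
rewrite (@big_ord_widen_eq0 _ F k.+1 (2 * n).+1) //.
by move=> j /andP[ltkj _]; rewrite /F bin_shift_eq0 ?ltkj // mulr0.
Qed.

Lemma hahn_hypF_expand (y : R) :
  hypF [:: - (2 * n)%:R; (2 * n)%:R + 2 * al + 1; - y] [:: al + 1; - p%:R] 1 (2 * n) =
  \sum_(k < (2 * n).+1) hahn_coef n al k * ((-1) ^+ k / poch (- p%:R) k) * poch (- y) k.
Proof.
rewrite /hypF; apply: eq_bigr => k _.
have p_neq0 : poch (- p%:R : R) k != 0.
  by apply: poch_opp_nat_neq0; have := ltn_ord k; lia.
have a_neq0 := poch_al1_neq0 al1_neq0 k; have f_neq0 := natr_fact_neq0 R k.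
rewrite !big_cons !big_nil expr1n !mulr1 /hahn_coef -signr_odd.
by case: (odd k); rewrite ?expr0 ?expr1; field; rewrite p_neq0 f_neq0 a_neq0.
Qed.

Lemma racah_hypF_expand (y : R) :
  hypF [:: - n%:R; n%:R + al + 2^-1; - y; y - p%:R]
       [:: al + 1; - p%:R / 2; (- p%:R + 1) / 2] 1 n =
  \sum_(k < (2 * n).+1)
    racah_coef_sum n al k * ((-1) ^+ k / poch (- p%:R) k) * poch (- y) k.
Proof.
transitivity (\sum_(j < n.+1) \sum_(k < (2 * n).+1)
               racah_term j * connection_coef p%:R j k * poch (- y) k).
  apply: eq_bigr => j _; rewrite /racah_term !big_cons !big_nil expr1n !mulr1.
  have -> : forall a b c d e f g : R, a * (b * (c * d)) / (e * (f * g)) / j`!%:R =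
      (a * b / (e * (f * g)) / j`!%:R) * (c * d) by move=> *; ring.
  rewrite (poch_opp_mul_sub _ _ (K := (2 * n).+1)); last by have := ltn_ord j; lia.
  by rewrite mulr_sumr; apply: eq_bigr => k _; exact: mulrA.
rewrite exchange_big; apply: eq_bigr => k _ /=.
have lek : (k <= 2 * n)%N by rewrite -ltnS.
rewrite -racah_coef_sum_widen // !mulr_suml; apply: eq_bigr => j _.
by rewrite racah_term_connection // -ltnS.
Qed.

End HypergeometricExpansions.

Theorem mainTheorem15 (C : numClosedFieldType) (M n : nat) (alpha x : C) :
  (1 <= M)%N ->
  (n <= uphalf M)%N ->
  (forall k : nat, alpha + 1 != - (k%:R)) ->
  let N : C := M%:R / 2 in
  hypF [:: - (2 * n)%:R; (2 * n)%:R + 2 * alpha + 1; - x - N - 2^-1]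
       [:: alpha + 1; - 2 * N - 1] 1 (2 * n)
  =
  hypF [:: - n%:R; n%:R + alpha + 2^-1; - x - N - 2^-1; x - N - 2^-1]
       [:: alpha + 1; - N - 2^-1; - N] 1 n.
Proof.
(* M = 0 would also do: then n = 0 and both sides equal 1. *)
move=> _ len alpha_ok N.
have al1_neq0 (i : nat) : alpha + 1 + i%:R != 0 by rewrite addr_eq0.
have le2n : (2 * n <= M.+1)%N by lia.
have two_neq0 : (2 : C) != 0 by rewrite pnatr_eq0.
set y := x + N + 2^-1.
have -> : - x - N - 2^-1 = - y by rewrite /y; ring.
have -> : x - N - 2^-1 = y - M.+1%:R by rewrite /y /N; field.
have -> : - 2 * N - 1 = - M.+1%:R by rewrite /N; field.
have -> : - N - 2^-1 = - M.+1%:R / 2 by rewrite /N; field.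
have -> : - N = (- M.+1%:R + 1) / 2 by rewrite /N; field.
rewrite hahn_hypF_expand // racah_hypF_expand //.
by apply: eq_bigr => k _; rewrite racah_coef_sum_hahn.
Qed.
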